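(* Let $m\ge3$, $n\ge1$ and $k=\lfloor n/2\rfloor$. For every probability distribution $p$ on the $m!$ strict rankings of $m$ candidates, $$P(m,n;p)\;\ge\;m\Bigl(1-B\bigl(k;n,\tfrac1m\bigr)\Bigr),$$ and equality holds for the distribution $p^*$ that assigns probability $1/m$ to each of the $m$ cyclic rankings $C_1C_2\cdots C_m$, $C_2C_3\cdots C_mC_1$, $\dots$, $C_mC_1\cdots C_{m-1}$ and probability $0$ to all other rankings. Thus $p^*$ minimizes the probability of a Condorcet winner, and the minimum value is $m(1-B(k;n,1/m))$.
   Context: $n$ voters independently choose a strict ranking (listed best to worst) of the candidates $C_1,\dots,C_m$ according to $p$. A candidate is a Condorcet winner if, for every other candidate, strictly more than $n/2$ voters rank it above that candidate. $P(m,n;p)$ is the probability that a Condorcet winner exists. $B(k;n,q)=\sum_{j=0}^{k}\binom nj q^j(1-q)^{n-j}$ is the binomial cumulative distribution function. *)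

From mathcomp Require Import all_boot all_order all_algebra all_fingroup.
Set Implicit Arguments. Unset Strict Implicit. Unset Printing Implicit Defensive.
Import Order.TTheory GRing.Theory Num.Theory.
Local Open Scope ring_scope.

(* Candidates C_1..C_m are 'I_m (C_{i+1} = i).  A strict ranking is a
   permutation s : {perm 'I_m}, read as "position j (0 = best) holds
   candidate s j". *)

Definition is_distr (R : numDomainType) (m : nat) (p : {ffun {perm 'I_m} -> R}) :=
  (forall s, 0 <= p s) /\ \sum_(s : {perm 'I_m}) p s = 1.

Definition prefers (m : nat) (s : {perm 'I_m}) (c d : 'I_m) : bool :=
  ((s^-1)%g c < (s^-1)%g d)%N.

Definition condorcet_winner (m n : nat) (prof : {ffun 'I_n -> {perm 'I_m}}) (c : 'I_m) : bool :=
  [forall d : 'I_m, (d != c) ==> (n < 2 * #|[set i : 'I_n | prefers (prof i) c d]|)%N].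

Definition has_condorcet_winner (m n : nat) (prof : {ffun 'I_n -> {perm 'I_m}}) : bool :=
  [exists c : 'I_m, condorcet_winner prof c].

Definition P_cw (R : numDomainType) (m n : nat) (p : {ffun {perm 'I_m} -> R}) : R :=
  \sum_(prof : {ffun 'I_n -> {perm 'I_m}} | has_condorcet_winner prof)
     \prod_(i : 'I_n) p (prof i).

Definition binom_cdf (R : numDomainType) (k n : nat) (q : R) : R :=
  \sum_(j < k.+1) ('C(n, j))%:R * q ^+ j * (1 - q) ^+ (n - j).

(* p^*: probability 1/m on each cyclic ranking C_{r+1} C_{r+2} ... (indices mod m),
   i.e. position j holds candidate (r + j) mod m; 0 elsewhere *)
Definition pstar (R : numFieldType) (m : nat) : {ffun {perm 'I_m} -> R} :=
  [ffun s : {perm 'I_m} =>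
     if [exists r : 'I_m, [forall j : 'I_m, val (s j) == ((r + j) %% m)%N]]
     then (m%:R)^-1 else 0].

From mathcomp Require Import all_boot all_order all_algebra all_fingroup.
From mathcomp Require Import ring lra zify.
Set Implicit Arguments. Unset Strict Implicit. Unset Printing Implicit Defensive.
Import Order.TTheory GRing.Theory Num.Theory.
Local Open Scope ring_scope.

(* Let q_c be the probability that a voter ranks c first and G(q) = 1 - B(k;n,q).
   The events "a strict majority ranks c first" are disjoint and each makes c a
   Condorcet winner, so P(m,n;p) >= sum_c G(q_c).  Under p^* they are the only way
   to get a winner: in a cyclic ranking, c beats its cyclic predecessor only when c
   is ranked first.  It remains to show sum_c G(q_c) >= m G(1/m) for every
   probability vector q: moving mass from a coordinate above 1/m to one below it
   does not increase the sum, by the two-point inequality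
   G(u) + G(x+y-u) <= G(x) + G(y) for y <= u <= x.
   For the latter, G(a) + G(s-a) is the expectation of [X > k] + [Y > k] for a
   trinomial (X,Y) with cell probabilities (a, s-a).  Raising a to a' in one trial
   changes it by (a'-a) (P(X'=k) - P(Y'=k)), where (X',Y') counts the other
   n-1 <= 2k trials; this is nonnegative once every trial favours X, since the
   probability on each antidiagonal x+y = const then grows from (a,b) towards
   its mirror image (b,a). *)

Section LatticeWalk.
Variable R : realFieldType.
Implicit Types (v : R * R) (L : seq (R * R)) (h : nat -> nat -> R).

(* [walk_op L h x y] is the expectation of [h] at the endpoint of the random
   lattice walk started at (x,y) whose steps v move right with probability v.1
   and up with probability v.2. *)
Definition step v h : nat -> nat -> R :=
  fun x y => (1 - v.1 - v.2) * h x y + v.1 * h x.+1 y + v.2 * h x y.+1.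

Fixpoint walk_op L h : nat -> nat -> R :=
  if L is v :: L' then walk_op L' (step v h) else h.

Definition walkE L h : R := walk_op L h 0%N 0%N.

Lemma walk_op_ext L h1 h2 : h1 =2 h2 -> walk_op L h1 =2 walk_op L h2.
Proof.
elim: L h1 h2 => [|v L IH] h1 h2 eq_h //=.
by apply: IH => x y; rewrite /step !eq_h.
Qed.

Lemma walkE_cons v L h : walkE (v :: L) h = walkE L (step v h).
Proof. by []. Qed.

Lemma walkE_ext L h1 h2 : h1 =2 h2 -> walkE L h1 = walkE L h2.
Proof. by move=> eq_h; apply: walk_op_ext. Qed.

Lemma walk_op_eq_on L d h1 h2 :
  (forall x y, (x + y <= d + size L)%N -> h1 x y = h2 x y) ->
  forall x y, (x + y <= d)%N -> walk_op L h1 x y = walk_op L h2 x y.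
Proof.
elim: L h1 h2 => [|v L IH] h1 h2 eq_h x y le_xy /=; first by apply: eq_h; rewrite addn0.
apply: IH le_xy => x' y' le_x'y'; rewrite /step !eq_h //=; lia.
Qed.

Lemma walkE_eq_on L h1 h2 :
  (forall x y, (x + y <= size L)%N -> h1 x y = h2 x y) -> walkE L h1 = walkE L h2.
Proof. by move=> eq_h; apply: (walk_op_eq_on (d := 0)). Qed.

Lemma walkED L h1 h2 : walkE L (fun x y => h1 x y + h2 x y) = walkE L h1 + walkE L h2.
Proof.
rewrite /walkE; elim: L h1 h2 => [|v L IH] h1 h2 //=.
rewrite -IH; apply: walk_op_ext => x y; rewrite /step; ring.
Qed.

Lemma walkEZ L c h : walkE L (fun x y => c * h x y) = c * walkE L h.
Proof.
rewrite /walkE; elim: L h => [|v L IH] h //=.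
rewrite -IH; apply: walk_op_ext => x y; rewrite /step; ring.
Qed.

Lemma walkE0 L : walkE L (fun _ _ => 0) = 0.
Proof.
rewrite -[RHS](mul0r (walkE L (fun _ _ => 0))) -walkEZ.
by apply: walkE_ext => x y; rewrite mul0r.
Qed.

Lemma walkEB L h1 h2 : walkE L (fun x y => h1 x y - h2 x y) = walkE L h1 - walkE L h2.
Proof. by rewrite -mulN1r -walkEZ -walkED; apply: walkE_ext => x y; ring. Qed.

Lemma walkE_sum L K (F : nat -> nat -> nat -> R) :
  walkE L (fun x y => \sum_(j < K) F j x y) = \sum_(j < K) walkE L (F j).
Proof.
elim: K => [|K IH].
  by rewrite big_ord0 -[RHS](walkE0 L); apply: walkE_ext => x y; rewrite big_ord0.
rewrite big_ord_recr /= -IH -walkED; apply: walkE_ext => x y; by rewrite big_ord_recr.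
Qed.

Lemma walkE_cat L1 L2 h : walkE (L1 ++ L2) h = walkE L2 (walk_op L1 h).
Proof. by rewrite /walkE; elim: L1 h => [|v L1 IH] h //=. Qed.

Definition biased v := [/\ 0 <= v.2, v.2 <= v.1 & v.1 + v.2 <= 1].

Lemma walkE_ge0 L h :
  {in L, forall v, biased v} -> (forall x y, 0 <= h x y) -> 0 <= walkE L h.
Proof.
elim: L h => [|v L IH] h L_biased h_ge0; first exact: h_ge0.
have [v2_ge0 v21 v12] := L_biased v (mem_head _ _).
apply: IH => [w w_in|x y]; first by apply: L_biased; rewrite inE w_in orbT.
by rewrite /step !addr_ge0 ?mulr_ge0 //; lra.
Qed.

Definition walk_prob L a b : R := walkE L (fun x y => ((x == a) && (y == b))%:R).

Lemma walk_prob_ge0 L a b : {in L, forall v, biased v} -> 0 <= walk_prob L a b.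
Proof. by move=> L_biased; apply: walkE_ge0 => // x y; rewrite ler0n. Qed.

Lemma walk_prob_cons v L a b :
  walk_prob (v :: L) a b = (1 - v.1 - v.2) * walk_prob L a b
     + v.1 * (if a is a'.+1 then walk_prob L a' b else 0)
     + v.2 * (if b is b'.+1 then walk_prob L a b' else 0).
Proof.
rewrite /walk_prob walkE_cons.
transitivity (walkE L (fun x y => (1 - v.1 - v.2) * ((x == a) && (y == b))%:R
   + v.1 * (if a is a'.+1 then ((x == a') && (y == b))%:R else 0)
   + v.2 * (if b is b'.+1 then ((x == a) && (y == b'))%:R else 0))).
  apply: walkE_ext => x y; rewrite /step; congr (_ + _ * _ + _ * _).
    by case: a.
  by case: b => [|b]; rewrite ?andbF.
rewrite !walkED !walkEZ.
by congr (_ + _ * _ + _ * _); [case: a | case: b] => *; rewrite ?walkE0.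
Qed.

Definition antidiag_mono L := forall a b a' b',
  (a + b = a' + b')%N -> (a <= a' <= b)%N -> walk_prob L a b <= walk_prob L a' b'.

Lemma walk_prob_cons_reflect v L a b :
  biased v -> {in L, forall w, biased w} -> antidiag_mono L -> (a <= b)%N ->
  walk_prob (v :: L) a b.+1 <= walk_prob (v :: L) b.+1 a.
Proof.
move=> [v2_ge0 v21 v12] L_biased mono_L le_ab.
have P_ge0 := walk_prob_ge0 _ _ L_biased.
have I1 : walk_prob L a b.+1 <= walk_prob L b.+1 a by apply: mono_L; lia.
rewrite !walk_prob_cons.
have T1 : (1 - v.1 - v.2) * (walk_prob L a b.+1 - walk_prob L b.+1 a) <= 0.
  by apply: mulr_ge0_le0; lra.
case: a le_ab I1 T1 => [|a] le_ab I1 T1.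
  have I2 : walk_prob L 0 b <= walk_prob L b 0 by apply: mono_L; lia.
  have T2 : v.2 * walk_prob L 0 b <= v.1 * walk_prob L b 0.
    by apply: ler_pM => //; apply: P_ge0.
  lra.
(* The right/up moves cannot be compared termwise here: split v.1 as v.2 + (v.1 - v.2). *)
have I2 : walk_prob L a b.+1 <= walk_prob L b.+1 a by apply: mono_L; lia.
have I3 : walk_prob L a.+1 b <= walk_prob L b a.+1 by apply: mono_L; lia.
have I4 : walk_prob L a b.+1 <= walk_prob L b a.+1 by apply: mono_L; lia.
have T2 : v.2 * (walk_prob L a b.+1 - walk_prob L b.+1 a) <= 0.
  by apply: mulr_ge0_le0; lra.
have T3 : v.2 * (walk_prob L a.+1 b - walk_prob L b a.+1) <= 0.
  by apply: mulr_ge0_le0; lra.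
have T4 : (v.1 - v.2) * (walk_prob L a b.+1 - walk_prob L b a.+1) <= 0.
  by apply: mulr_ge0_le0; lra.
lra.
Qed.

Lemma biased_antidiag_mono L : {in L, forall v, biased v} -> antidiag_mono L.
Proof.
elim: L => [|v L IH] L_biased a b a' b' sum_ab /andP[le_aa' le_a'b].
  rewrite /walk_prob /walkE /=.
  case: (boolP ((0 == a) && (0 == b))%N) => [/andP[/eqP Ea /eqP Eb]|_].
    by have [-> ->] : a' = 0%N /\ b' = 0%N by lia.
  by rewrite ler0n.
have tail_biased : {in L, forall w, biased w}.
  by move=> w w_in; apply: L_biased; rewrite inE w_in orbT.
have mono_L := IH tail_biased.
have [v2_ge0 v21 v12] := L_biased v (mem_head _ _).
have P_ge0 := walk_prob_ge0 _ _ tail_biased.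
case: (ltngtP a a') le_aa' => // [lt_aa'|eq_aa'] _; last first.
  by rewrite -eq_aa'; have -> : b' = b by lia.
case: b sum_ab le_a'b => [|b] sum_ab le_a'b; first lia.
case: a' sum_ab lt_aa' le_a'b => [|a'] sum_ab lt_aa' le_a'b; first lia.
case: (ltngtP a' b) => [lt_a'b||eq_a'b]; [|lia|]; last first.
  subst a'; have -> : b' = a by lia.
  apply: (walk_prob_cons_reflect (L_biased v (mem_head _ _))) => //; lia.
case: b' sum_ab => [|b'] sum_ab; first lia.
rewrite !walk_prob_cons.
have I1 : walk_prob L a b.+1 <= walk_prob L a'.+1 b'.+1 by apply: mono_L; lia.
have I2 : walk_prob L a b <= walk_prob L a'.+1 b' by apply: mono_L; lia.
have I3 : (if a is a0.+1 then walk_prob L a0 b.+1 else 0) <= walk_prob L a' b'.+1.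
  by case: a sum_ab lt_aa' I1 I2 => [|a] *; [apply: P_ge0 | apply: mono_L; lia].
by rewrite !lerD // ler_wpM2l //; lra.
Qed.

Lemma sum_ord_eq_ind K y : (y < K)%N -> \sum_(j < K) (y == j)%:R = 1 :> R.
Proof.
move=> lt_yK; rewrite (bigD1 (Ordinal lt_yK)) //= eqxx big1 ?addr0 // => j ne_j.
by case: eqP => // eq_yj; case/eqP: ne_j; apply: val_inj.
Qed.

Lemma eq_ind_sub_sum k x y : (x + y <= 2 * k)%N ->
  ((x == k)%:R - (y == k)%:R : R) =
  \sum_(j < k.+1) (((x == k) && (y == j))%:R - ((x == j) && (y == k))%:R).
Proof.
move=> le_xy; rewrite sumrB; congr (_ - _).
  have [eq_xk|_] /= := eqVneq x k; last by rewrite big1.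
  by rewrite sum_ord_eq_ind //; lia.
have [eq_yk|_] := eqVneq y k; last by rewrite big1 // => j _; rewrite andbF.
under eq_bigr do rewrite andbT.
by rewrite sum_ord_eq_ind //; lia.
Qed.

Lemma walkE_eq_fst_sub_snd_ge0 L k :
  {in L, forall v, biased v} -> (size L <= 2 * k)%N ->
  0 <= walkE L (fun x y => (x == k)%:R - (y == k)%:R).
Proof.
move=> L_biased le_Lk.
rewrite (walkE_eq_on (h2 := fun x y => \sum_(j < k.+1)
  (((x == k) && (y == j))%:R - ((x == j) && (y == k))%:R))); last first.
  by move=> x y le_xy; apply: eq_ind_sub_sum; lia.
rewrite (walkE_sum L k.+1 (fun j x y =>
  ((x == k) && (y == j))%:R - ((x == j) && (y == k))%:R)).
apply: sumr_ge0 => j _; rewrite walkEB subr_ge0.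
by apply: (biased_antidiag_mono L_biased); have := ltn_ord j; lia.
Qed.

Definition shift_diff h : nat -> nat -> R := fun x y => h x.+1 y - h x y.+1.

Lemma walk_op_shift_diff L h x y :
  shift_diff (walk_op L h) x y = walk_op L (shift_diff h) x y.
Proof.
elim: L h x y => [|v L IH] h x y //=; rewrite IH.
by apply: walk_op_ext => x' y'; rewrite /shift_diff /step; ring.
Qed.

Definition tail_pair k : nat -> nat -> R := fun x y => (k < x)%:R + (k < y)%:R.

Lemma shift_diff_tail_pair k x y :
  shift_diff (tail_pair k) x y = (x == k)%:R - (y == k)%:R.
Proof.
have ltS z : ((k < z.+1)%:R - (k < z)%:R : R) = (z == k)%:R.
  by rewrite ltnS leq_eqVlt eq_sym; case: eqP => [->|_]; rewrite ?ltnn ?subr0 ?subrr.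
by rewrite /shift_diff /tail_pair -ltS -(ltS y); ring.
Qed.

Lemma walkE_tail_pair_step k L1 L2 (s u x : R) :
  {in L1 ++ L2, forall v, biased v} -> (size (L1 ++ L2) <= 2 * k)%N -> u <= x ->
  walkE (L1 ++ (u, s - u) :: L2) (tail_pair k)
  <= walkE (L1 ++ (x, s - x) :: L2) (tail_pair k).
Proof.
move=> L_biased le_Lk le_ux; rewrite !walkE_cat !walkE_cons.
set h := walk_op L1 _.
have -> : walkE L2 (step (x, s - x) h)
    = walkE L2 (step (u, s - u) h) + (x - u) * walkE L2 (shift_diff h).
  by rewrite -walkEZ -walkED; apply: walkE_ext => a b; rewrite /step /shift_diff /=; ring.
rewrite lerDl mulr_ge0 ?subr_ge0 //.
rewrite (walkE_ext _ (walk_op_shift_diff L1 _)) -walkE_cat.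
rewrite (walkE_ext _ (shift_diff_tail_pair k)).
exact: walkE_eq_fst_sub_snd_ge0.
Qed.

Lemma walkE_tail_pair_mono n k (s u x : R) :
  (n <= (2 * k).+1)%N -> s <= 1 -> s <= 2 * u -> u <= x -> x <= s ->
  walkE (nseq n (u, s - u)) (tail_pair k) <= walkE (nseq n (x, s - x)) (tail_pair k).
Proof.
move=> le_nk le_s1 le_su le_ux le_xs.
pose mixed i := nseq i (x, s - x) ++ nseq (n - i) (u, s - u).
have biased_mixed a b : {in nseq a (x, s - x) ++ nseq b (u, s - u), forall v, biased v}.
  by move=> v; rewrite mem_cat => /orP[] /nseqP[-> _]; split=> /=; lra.
suff: forall i, (i <= n)%N ->
    walkE (mixed 0%N) (tail_pair k) <= walkE (mixed i) (tail_pair k).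
  by move/(_ n (leqnn n)); rewrite /mixed subn0 subnn cats0.
elim=> [|i IH] le_in //; apply: le_trans (IH (ltnW le_in)) _.
rewrite /mixed -addn1 nseqD -catA (_ : n - i = (n - (i + 1)).+1)%N; last lia.
apply: walkE_tail_pair_step le_ux; first exact: biased_mixed.
by rewrite size_cat !size_nseq; lia.
Qed.

End LatticeWalk.

Section BinomialTail.
Variable R : realFieldType.
Implicit Types (a b q : R) (g : nat -> R).

Definition binomE n a g : R :=
  \sum_(j < n.+1) 'C(n, j)%:R * a ^+ j * (1 - a) ^+ (n - j) * g j.

Lemma binomE0 a g : binomE 0 a g = g 0%N.
Proof. by rewrite /binomE big_ord1 /= bin0 !expr0 !mul1r. Qed.

Lemma binomES n a g :
  binomE n.+1 a g = binomE n a (fun j => (1 - a) * g j + a * g j.+1).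
Proof.
rewrite /binomE big_ord_recl /= bin0 subn0.
under eq_bigr => j _ do rewrite /bump leq0n add1n binS natrD subSS !mulrDl.
rewrite big_split /=.
under [in RHS]eq_bigr => j _ do rewrite mulrDr.
rewrite [in RHS]big_split /= addrA; congr (_ + _); last first.
  by apply: eq_bigr => j _; rewrite exprS; ring.
rewrite [in RHS]big_ord_recl /= bin0 subn0.
rewrite [X in _ + X = _]big_ord_recr /= bin_small // !mul0r addr0.
congr (_ + _); first by rewrite exprS expr0; ring.
apply: eq_bigr => j _; rewrite /bump leq0n add1n.
rewrite (_ : n - j = (n - j.+1).+1)%N; last by have := ltn_ord j; lia.
rewrite [(1 - a) ^+ (_.+1)]exprS; ring.
Qed.

Lemma walkE_nseq_fst n a b g : walkE (nseq n (a, b)) (fun x _ => g x) = binomE n a g.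
Proof.
elim: n g => [|n IH] g; first by rewrite binomE0.
by rewrite binomES -IH walkE_cons; apply: walkE_ext => x y; rewrite /step /=; ring.
Qed.

Lemma walkE_nseq_snd n a b g : walkE (nseq n (a, b)) (fun _ y => g y) = binomE n b g.
Proof.
elim: n g => [|n IH] g; first by rewrite binomE0.
by rewrite binomES -IH walkE_cons; apply: walkE_ext => x y; rewrite /step /=; ring.
Qed.

Definition binom_tail n k q : R := binomE n q (fun j => (k < j)%:R).

Lemma binom_tailE n k q : (k <= n)%N -> binom_tail n k q = 1 - binom_cdf k n q.
Proof.
move=> le_kn.
have binom_sum1 : \sum_(j < n.+1) 'C(n, j)%:R * q ^+ j * (1 - q) ^+ (n - j) = 1.
  rewrite [RHS](_ : 1 = (1 - q + q) ^+ n); last by rewrite subrK expr1n.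
  rewrite exprDn.
  by apply: eq_bigr => j _; rewrite -mulr_natl; ring.
rewrite /binom_cdf -{1}binom_sum1 /binom_tail /binomE.
rewrite (@big_ord_widen _ _ _ k.+1 n.+1
  (fun j => 'C(n, j)%:R * q ^+ j * (1 - q) ^+ (n - j))) //.
rewrite [X in _ = _ - X]big_mkcond -sumrB; apply: eq_bigr => j _ /=.
by rewrite ltnS; case: leqP => _; rewrite ?mulr0 ?mulr1 ?subrr ?subr0.
Qed.

Lemma binom_tail_pair n k a s :
  binom_tail n k a + binom_tail n k (s - a) = walkE (nseq n (a, s - a)) (tail_pair R k).
Proof. by rewrite walkED walkE_nseq_fst walkE_nseq_snd. Qed.

Lemma binom_tail_transfer n k (x y u : R) :
  (n <= (2 * k).+1)%N -> 0 <= y -> y <= u -> u <= x -> x + y <= 1 ->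
  binom_tail n k u + binom_tail n k (x + y - u) <= binom_tail n k x + binom_tail n k y.
Proof.
move=> le_nk y_ge0 le_yu le_ux le_xy1.
have -> : binom_tail n k x + binom_tail n k y
    = walkE (nseq n (x, x + y - x)) (tail_pair R k).
  by rewrite -binom_tail_pair; congr (_ + binom_tail _ _ _); ring.
have [le_su|lt_us] := lerP (x + y) (2 * u).
  by rewrite binom_tail_pair; apply: walkE_tail_pair_mono => //; lra.
have -> : binom_tail n k u = binom_tail n k (x + y - (x + y - u)) by congr binom_tail; ring.
by rewrite addrC binom_tail_pair; apply: walkE_tail_pair_mono => //; lra.
Qed.

End BinomialTail.

Section Smoothing.
Variables (R : realFieldType) (T : finType).
Implicit Types (q : T -> R) (mu : R).

Lemma sum_split2 (G : T -> R) i j : j != i ->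
  \sum_c G c = G i + G j + \sum_(c | (c != i) && (c != j)) G c.
Proof. by move=> ne_ji; rewrite (bigD1 i) //= (bigD1 j) //= addrA. Qed.

Lemma exists_gt_lt_mean q mu c0 : \sum_c (q c - mu) = 0 -> q c0 != mu ->
  (exists i, mu < q i) /\ (exists j, q j < mu).
Proof.
move=> sum0 ne_c0.
have c0_eq (f : T -> R) : (forall c, 0 <= f c) -> \sum_c f c = 0 -> f c0 = 0.
  by move=> f_ge0 /psumr_eq0P; apply.
split; apply/existsP; apply: contraT; rewrite negb_exists => /forallP /= cmp.
  have /eqP : mu - q c0 = 0.
    apply: (c0_eq (fun c => mu - q c)) => [c|]; first by rewrite subr_ge0 leNgt cmp.
    apply/eqP; rewrite -oppr_eq0 -sumrN (eq_bigr (fun c => q c - mu)) ?sum0 //.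
    by move=> c _; rewrite opprB.
  by rewrite subr_eq0 eq_sym (negbTE ne_c0).
have /eqP : q c0 - mu = 0.
  by apply: (c0_eq (fun c => q c - mu)) => // c; rewrite subr_ge0 leNgt cmp.
by rewrite subr_eq0 (negbTE ne_c0).
Qed.

Definition transfer q i j mu : T -> R :=
  fun c => if c == i then mu else if c == j then q i + q j - mu else q c.

Lemma sum_transfer (G : R -> R) q i j mu : j != i ->
  \sum_c G (transfer q i j mu c)
  = \sum_c G (q c) - G (q i) - G (q j) + G mu + G (q i + q j - mu).
Proof.
move=> ne_ji; rewrite !(sum_split2 _ ne_ji) /transfer eqxx (negbTE ne_ji) eqxx.
rewrite (eq_bigr (fun c => G (q c))) => [|c /andP[/negbTE -> /negbTE ->]] //; ring.
Qed.

Lemma card_transfer_lt q i j mu : j != i -> mu < q i -> q j < mu ->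
  (#|[set c | transfer q i j mu c != mu]| < #|[set c | q c != mu]|)%N.
Proof.
move=> ne_ji lt_i lt_j.
have sub : [set c | transfer q i j mu c != mu] \subset [set c | q c != mu] :\ i.
  apply/subsetP => c; rewrite !inE /transfer.
  have [->|ne_ci] := eqVneq c i; first by rewrite eqxx.
  have [->|_] := eqVneq c j; last by [].
  by move=> _; rewrite lt_eqF.
apply: leq_ltn_trans (subset_leq_card sub) _.
by rewrite [X in (_ < X)%N](cardsD1 i) inE gt_eqF.
Qed.

Variable F : R -> R.
Hypothesis F_transfer : forall x y u : R,
  0 <= y -> y <= u -> u <= x -> x + y <= 1 -> F u + F (x + y - u) <= F x + F y.

Lemma card_uniform_le_sum q : (forall c, 0 <= q c) -> \sum_c q c = 1 ->
  #|T|%:R * F #|T|%:R^-1 <= \sum_c F (q c).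
Proof.
have [c0 _|T0] := pickP (@predT T); last first.
  by move=> _; rewrite big_pred0 // => /eqP; rewrite eq_sym oner_eq0.
set mu := #|T|%:R^-1.
have mu_sum : #|T|%:R * mu = 1.
  by rewrite mulfV // pnatr_eq0 -lt0n; apply/card_gt0P; exists c0.
move: {2}#|_| (leqnn #|[set c | q c != mu]|) => N; elim: N q => [|N IH] q le_N q_ge0 q_sum.
  suff q_mu c : q c = mu by under eq_bigr do rewrite q_mu; rewrite sumr_const mulr_natl.
  apply/eqP; apply: contraTT le_N => ne_c; rewrite -ltnNge.
  by apply/card_gt0P; exists c; rewrite inE.
have [q_mu|] := boolP [forall c, q c == mu].
  by under eq_bigr do rewrite (eqP (forallP q_mu _)); rewrite sumr_const mulr_natl.
rewrite negb_forall => /existsP[c ne_c].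
have sum0 : \sum_c (q c - mu) = 0 by rewrite sumrB q_sum sumr_const -mulr_natl mu_sum subrr.
have [[i lt_i] [j lt_j]] := exists_gt_lt_mean sum0 ne_c.
have ne_ji : j != i by apply: contraTneq lt_j => ->; rewrite -leNgt ltW.
have qij_le1 : q i + q j <= 1.
  by rewrite -q_sum (sum_split2 _ ne_ji) lerDl sumr_ge0.
apply: le_trans (IH (transfer q i j mu) _ _ _) _.
- by rewrite -ltnS; apply: leq_trans le_N; apply: card_transfer_lt.
- move=> d; rewrite /transfer; case: ifP => _; first by rewrite /mu invr_ge0 ler0n.
  by case: ifP => _ //; have := q_ge0 j; lra.
- by rewrite (sum_transfer id) // q_sum; ring.
rewrite sum_transfer //; have := F_transfer (q_ge0 j) (ltW lt_j) (ltW lt_i) qij_le1; lra.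
Qed.

End Smoothing.

Section Profiles.
Variables (R : realFieldType) (T : finType) (n : nat) (w : T -> R) (A : pred T).

Lemma sum_ffun_prod_set (S : {set 'I_n}) :
  \sum_(f : {ffun 'I_n -> T} | [set i | A (f i)] == S) \prod_i w (f i)
  = (\sum_(t | A t) w t) ^+ #|S| * (\sum_(t | ~~ A t) w t) ^+ (n - #|S|).
Proof.
rewrite (eq_bigl (fun f : {ffun 'I_n -> T} =>
  f \in family (fun i => [pred t | A t == (i \in S)]))).
  rewrite -(bigA_distr_big_dep _ (fun i t => w t)) (bigID (mem S)) /=.
  rewrite (eq_bigr (fun _ => \sum_(t | A t) w t)) => [|i Si]; last first.
    by apply: eq_bigl => t; rewrite Si eqb_id.
  rewrite [X in _ * X](eq_bigr (fun _ => \sum_(t | ~~ A t) w t)) => [|i Si]; last first.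
    by apply: eq_bigl => t; rewrite (negbTE Si) eqbF_neg.
  rewrite !prodr_const; congr (_ * _ ^+ _).
  have := cardsC S; rewrite card_ord => cardSC.
  rewrite (eq_card (B := ~: S)) => [|i]; last by rewrite !inE.
  by move: cardSC; move: #|S| #|~: S| => a b; lia.
move=> f; apply/eqP/familyP => [<- i|f_S]; first by rewrite !inE.
by apply/setP => i; rewrite inE; move: (f_S i); rewrite inE => /eqP.
Qed.

Lemma sum_ffun_count_binomE (g : nat -> R) : \sum_t w t = 1 ->
  \sum_(f : {ffun 'I_n -> T}) g #|[set i | A (f i)]| * \prod_i w (f i)
  = binomE n (\sum_(t | A t) w t) g.
Proof.
move=> w_sum1; set a := \sum_(t | A t) w t.
have sumC : \sum_(t | ~~ A t) w t = 1 - a.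
  by rewrite -w_sum1 [in RHS](bigID A) /= -/a addrAC subrr add0r.
rewrite (partition_big (fun f : {ffun 'I_n -> T} => [set i | A (f i)]) xpredT) //=.
rewrite (eq_bigr (fun S : {set 'I_n} => g #|S| * (a ^+ #|S| * (1 - a) ^+ (n - #|S|))))
  => [|S _]; last first.
  by rewrite -sumC -sum_ffun_prod_set mulr_sumr; apply: eq_bigr => f /eqP <-.
have card_lt (S : {set 'I_n}) : (#|S| < n.+1)%N.
  by rewrite ltnS; have := max_card S; rewrite card_ord.
rewrite (partition_big (fun S : {set 'I_n} => Ordinal (card_lt S)) xpredT) //=.
apply: eq_bigr => j _.
rewrite (eq_bigr (fun _ => g j * (a ^+ j * (1 - a) ^+ (n - j)))) => [|S /eqP <-] //.
rewrite sumr_const (_ : #|_| = 'C(n, j)); first by rewrite -mulr_natl; ring.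
have := card_draws 'I_n j; rewrite card_ord => <-; apply: eq_card => S.
by rewrite !inE; apply/eqP/eqP => [<-|eq_Sj] //; apply: val_inj.
Qed.

End Profiles.

Section TopMajority.
Variables (R : realFieldType) (n m : nat).
Implicit Types (prof : {ffun 'I_n -> {perm 'I_m.+1}}) (p : {ffun {perm 'I_m.+1} -> R}).
Implicit Types (s : {perm 'I_m.+1}) (c d : 'I_m.+1).

Definition top_majority prof c : bool := (n < 2 * #|[set i | prof i ord0 == c]|)%N.

Definition P_top p c : R :=
  \sum_(prof : {ffun 'I_n -> {perm 'I_m.+1}}) (top_majority prof c)%:R * \prod_i p (prof i).

Definition top_prob p c : R := \sum_(s : {perm 'I_m.+1} | s ord0 == c) p s.

Lemma prefers_top s d : d != s ord0 -> prefers s (s ord0) d.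
Proof.
move=> ne_d; rewrite /prefers permK lt0n; apply: contra ne_d => /eqP eq_d0.
by apply/eqP; rewrite -{1}(permKV s d); congr (s _); apply: val_inj.
Qed.

Lemma top_majority_cw prof c : top_majority prof c -> condorcet_winner prof c.
Proof.
move=> top_c; apply/forallP => d; apply/implyP => ne_dc.
apply: (leq_trans top_c); rewrite leq_mul2l /=; apply/subset_leq_card/subsetP => i.
by rewrite !inE => /eqP top_i; rewrite -top_i prefers_top // top_i.
Qed.

Lemma top_majority_uniq prof c d :
  top_majority prof c -> top_majority prof d -> c = d.
Proof.
rewrite /top_majority => top_c top_d; apply/eqP/negP => ne_cd.
have disj : [set i | prof i ord0 == c] :&: [set i | prof i ord0 == d] = set0.
  apply/setP => i; rewrite !inE; apply/negP => /andP[/eqP top_ic /eqP top_id].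
  by apply: ne_cd; rewrite -top_ic -top_id.
have := cardsUI [set i | prof i ord0 == c] [set i | prof i ord0 == d].
rewrite disj cards0 addn0.
have := max_card ([set i | prof i ord0 == c] :|: [set i | prof i ord0 == d]).
by rewrite card_ord; lia.
Qed.

Lemma sum_top_majority prof :
  \sum_c (top_majority prof c)%:R = [exists c, top_majority prof c]%:R :> R.
Proof.
case: existsP => [[c top_c]|no_top]; last first.
  rewrite big1 // => c _.
  by case: (boolP (top_majority prof c)) => // top_c; case: no_top; exists c.
rewrite (bigD1 c) //= top_c big1 ?addr0 // => d ne_dc.
case: (boolP (top_majority prof d)) => // top_d.
by case/eqP: ne_dc; apply: top_majority_uniq top_d top_c.
Qed.

Lemma sum_top_prob p : \sum_c top_prob p c = \sum_s p s.
Proof. by rewrite (partition_big (fun s => s ord0) xpredT). Qed.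

Lemma P_topE p c : \sum_s p s = 1 -> P_top p c = binom_tail n n./2 (top_prob p c).
Proof.
move=> p_sum1; rewrite /P_top /binom_tail -sum_ffun_count_binomE //.
by apply: eq_bigr => prof _; rewrite /top_majority mul2n -ltn_half_double.
Qed.

Lemma sum_P_top_le_P_cw p : (forall s, 0 <= p s) -> \sum_c P_top p c <= P_cw n p.
Proof.
move=> p_ge0; rewrite /P_top exchange_big /P_cw [X in _ <= X]big_mkcond /=.
apply: ler_sum => prof _; rewrite -mulr_suml sum_top_majority.
have [[c top_c]|_] := existsP; last by rewrite mul0r; case: ifP => // _; exact: prodr_ge0.
rewrite (_ : has_condorcet_winner prof) ?mul1r //.
by apply/existsP; exists c; exact: top_majority_cw.
Qed.

End TopMajority.

Section CyclicRankings.
Variables (R : realFieldType) (m : nat).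
Implicit Types (s : {perm 'I_m.+1}) (c r j : 'I_m.+1).

Definition is_cyclic s : bool :=
  [exists r : 'I_m.+1, [forall j : 'I_m.+1, val (s j) == ((r + j) %% m.+1)%N]].

Lemma pstarE s : pstar R m.+1 s = if is_cyclic s then m.+1%:R^-1 else 0.
Proof. by rewrite ffunE. Qed.

Definition rot_fun r j : 'I_m.+1 := Ordinal (ltn_pmod (r + j) (ltn0Sn m)).

Lemma rot_fun_inj r : injective (rot_fun r).
Proof.
move=> j j' /(congr1 val) /= /eqP; rewrite eqn_modDl !modn_small // => /eqP.
exact: val_inj.
Qed.

Definition cyclic_perm r : {perm 'I_m.+1} := perm (@rot_fun_inj r).

Lemma cyclic_permE r j : val (cyclic_perm r j) = ((r + j) %% m.+1)%N.
Proof. by rewrite permE. Qed.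

Lemma cyclic_perm_top r : cyclic_perm r ord0 = r.
Proof. by apply: val_inj; rewrite cyclic_permE addn0 modn_small. Qed.

Lemma is_cyclic_perm r : is_cyclic (cyclic_perm r).
Proof. by apply/existsP; exists r; apply/forallP => j; rewrite cyclic_permE. Qed.

Lemma is_cyclicP s : is_cyclic s -> s = cyclic_perm (s ord0).
Proof.
case/existsP => r /forallP s_rot.
have top : s ord0 = r by apply: val_inj; rewrite (eqP (s_rot ord0)) addn0 modn_small.
by apply/permP => j; apply: val_inj; rewrite cyclic_permE top; apply/eqP.
Qed.

Lemma top_prob_pstar c : top_prob (pstar R m.+1) c = m.+1%:R^-1.
Proof.
rewrite /top_prob (bigD1 (cyclic_perm c)) ?cyclic_perm_top //= pstarE is_cyclic_perm.
rewrite big1 ?addr0 // => s /andP[/eqP top_s ne_s]; rewrite pstarE.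
by case: ifP => // /is_cyclicP s_rot; case/eqP: ne_s; rewrite s_rot top_s.
Qed.

Lemma pstar_distr : is_distr (pstar R m.+1).
Proof.
split=> [s|]; first by rewrite pstarE; case: ifP; rewrite ?invr_ge0 ?ler0n.
rewrite -sum_top_prob (eq_bigr _ (fun c _ => top_prob_pstar c)) sumr_const card_ord.
by rewrite -[_ *+ _]mulr_natl mulfV // pnatr_eq0.
Qed.

Definition prev_cand c : 'I_m.+1 := Ordinal (ltn_pmod (c + m) (ltn0Sn m)).

Lemma prev_cand_neq c : (0 < m)%N -> prev_cand c != c.
Proof.
move=> m_gt0; apply/eqP => /(congr1 val) /=.
have [->|c_gt0] := posnP c; first by rewrite add0n modn_small //; lia.
rewrite (_ : c + m = c.-1 + m.+1)%N; last lia.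
by rewrite modnDr modn_small; [lia | have := ltn_ord c; lia].
Qed.

Lemma cyclic_prefers_prev s c : is_cyclic s -> prefers s c (prev_cand c) -> s ord0 = c.
Proof.
move/is_cyclicP => s_rot; rewrite /prefers.
set jc := (s^-1)%g c; have s_jc : s jc = c by rewrite /jc permKV.
have [jc0|jc_gt0] := posnP jc; first by rewrite -s_jc (_ : jc = ord0) //; apply: val_inj.
have lt_jc : (jc.-1 < m.+1)%N by have := ltn_ord jc; lia.
suff -> : (s^-1)%g (prev_cand c) = Ordinal lt_jc by rewrite /=; lia.
have val_s j : val (s j) = ((s ord0 + j) %% m.+1)%N by rewrite {1}s_rot cyclic_permE.
apply: (canLR (permK s)); apply: val_inj; rewrite val_s /= -s_jc val_s modnDml.
by rewrite (_ : s ord0 + jc + m = s ord0 + jc.-1 + m.+1)%N ?modnDr //; lia.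
Qed.

Lemma cyclic_cw_top_majority n (prof : {ffun 'I_n -> {perm 'I_m.+1}}) c :
  (0 < m)%N -> (forall i, is_cyclic (prof i)) ->
  condorcet_winner prof c -> top_majority prof c.
Proof.
move=> m_gt0 cyc /forallP /(_ (prev_cand c)) /implyP /(_ (prev_cand_neq c m_gt0)) maj.
apply: (leq_trans maj); rewrite leq_mul2l /=; apply/subset_leq_card/subsetP => i.
by rewrite !inE => pref; apply/eqP; apply: cyclic_prefers_prev.
Qed.

Lemma P_cw_pstar n : (0 < m)%N ->
  P_cw n (pstar R m.+1) = \sum_c P_top n (pstar R m.+1) c.
Proof.
move=> m_gt0; rewrite /P_top exchange_big /P_cw big_mkcond /=; apply: eq_bigr => prof _.
rewrite -mulr_suml sum_top_majority.
have [cyc|] := boolP [forall i, is_cyclic (prof i)].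
  have -> : has_condorcet_winner prof = [exists c, top_majority prof c].
    apply/existsP/existsP => -[c win]; exists c.
      exact: cyclic_cw_top_majority (forallP cyc) win.
    exact: top_majority_cw.
  by case: existsP; rewrite ?mul1r ?mul0r.
rewrite negb_forall => /existsP[i not_cyc].
by rewrite (bigD1 i) //= pstarE (negbTE not_cyc) mul0r mulr0; case: ifP.
Qed.

End CyclicRankings.

Theorem mainTheorem10 (R : realFieldType) (m n : nat) :
  (3 <= m)%N -> (1 <= n)%N ->
  (forall p : {ffun {perm 'I_m} -> R}, is_distr p ->
     m%:R * (1 - binom_cdf n./2 n (m%:R)^-1) <= P_cw n p)
  /\ is_distr (pstar R m)
  /\ P_cw n (pstar R m) = m%:R * (1 - binom_cdf n./2 n (m%:R)^-1).
Proof.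
case: m => [|m] // m_ge3 _; have m_gt0 : (0 < m)%N by lia.
rewrite -binom_tailE; last by rewrite leq_half_double; lia.
split; [|split]; first last.
- rewrite P_cw_pstar // (eq_bigr _ (fun c _ => P_topE n c (proj2 (pstar_distr R m)))).
  by under eq_bigr do rewrite top_prob_pstar; rewrite sumr_const card_ord mulr_natl.
- exact: pstar_distr.
move=> p [p_ge0 p_sum1]; apply: le_trans (sum_P_top_le_P_cw n p_ge0).
rewrite (eq_bigr _ (fun c _ => P_topE n c p_sum1)).
have := @card_uniform_le_sum R 'I_m.+1 (binom_tail n n./2) _ (top_prob p).
rewrite card_ord; apply=> [x y u *||]; last by rewrite sum_top_prob.
  by apply: binom_tail_transfer => //; rewrite mul2n -leq_half_double.
by move=> c; apply: sumr_ge0.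
Qed.
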